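(* Let $\mathcal K$ be a 2-category which admits Eilenberg–Moore constructions for monads and in which idempotent 2-cells split. Let $\varrho:(V,\psi)\Rightarrow(W,\phi)$ be a 2-cell in $\mathrm{EM}^w(\mathcal K)$ between 1-cells $(t,\mu,\eta)\to(t',\mu',\eta')$. For $X\in\{V,W\}$ with structure 2-cell $\chi\in\{\psi,\phi\}$, let $Xv\overset{\pi}{\Rightarrow}\widetilde X\overset{\iota}{\Rightarrow}Xv$ be the chosen splitting of the idempotent $Xv\epsilon\ast\chi v\ast\eta'Xv$, and let $\widetilde\psi:=\pi\ast Vv\epsilon\ast\psi v\ast t'\iota$, $\widetilde\phi:=\pi\ast Wv\epsilon\ast\phi v\ast t'\iota$. Then $\widetilde\varrho:=\pi\ast Wv\epsilon\ast\varrho v\ast\iota:\widetilde V\Rightarrow\widetilde W$ is a 2-cell $(\widetilde V,\widetilde\psi)\Rightarrow(\widetilde W,\widetilde\phi)$ in $\mathrm{EM}(\mathcal K)$, i.e. $\widetilde\varrho\ast\widetilde\psi=\widetilde\phi\ast t'\widetilde\varrho$.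
   Context: Conventions in a 2-category $\mathcal K$: horizontal composition and whiskering by juxtaposition in the order of functor composition; identity 1-cell of $k$ written $k$, identity 2-cell of $V$ written $V$; vertical composition $\ast$ with $\alpha\ast\beta$ meaning $\beta$ then $\alpha$. A monad $(t,\mu,\eta)$ on $k$: $t:k\to k$, $\mu:tt\Rightarrow t$, $\eta:k\Rightarrow t$, associative and unital. $\mathrm{EM}^w(\mathcal K)$: a 1-cell $(t,\mu,\eta)\to(t',\mu',\eta')$ ($t$ on $k$, $t'$ on $k'$) is $(V,\psi)$, $V:k\to k'$, $\psi:t'V\Rightarrow Vt$, with $V\mu\ast\psi t\ast t'\psi=\psi\ast\mu'V$; a 2-cell $(V,\psi)\Rightarrow(W,\phi)$ is $\varrho:V\Rightarrow Wt$ with $W\mu\ast\varrho t\ast\psi=W\mu\ast\phi t\ast t'\varrho$ and $\varrho=W\mu\ast\phi t\ast\eta'Wt\ast\varrho$. In the Lack–Street 2-category $\mathrm{EM}(\mathcal K)$, 1-cells from an identity monad $I(l)$ to $t'$ are pairs $(A,\alpha:t'A\Rightarrow A)$ ($t'$-algebras) and 2-cells $(A,\alpha)\Rightarrow(B,\beta)$ are $\rho:A\Rightarrow B$ with $\beta\ast t'\rho=\rho\ast\alpha$. $\mathcal K$ admits Eilenberg–Moore constructions for monads: the inclusion $I:\mathcal K\to\mathrm{EM}(\mathcal K)$ has a right 2-adjoint $J$; each monad $(t,\mu,\eta)$ on $k$ gives an adjunction $f\dashv v$, $f:k\to J(t)$, $v:J(t)\to k$, unit $\eta$, counit $\epsilon:fv\Rightarrow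 J(t)$, with $t=vf$, $\mu=v\epsilon f$; for $t'$: $f',v',\eta',\epsilon'$. Idempotent 2-cells split (every idempotent $e$ factors as $e=\iota\ast\pi$ with $\pi\ast\iota$ an identity). For a 1-cell $(X,\chi)$ of $\mathrm{EM}^w(\mathcal K)$, $Xv\epsilon\ast\chi v\ast\eta'Xv$ is idempotent, and $(\widetilde X,\widetilde\chi)$ is a $t'$-algebra on $\widetilde X:J(t)\to k'$. *)

(* Strict 2-categories.
   comp1 g f = "g f" (functor order: first f, then g).
   vcomp a b = "a * b" (first b, then a).
   hcomp a b : (g f) => (g' f') for a : g => g', b : f => f'.
   1-cell equalities are propositional; the strictness axioms for
   horizontal composition are stated up to transport along them. *)
Record TwoCat := {
  Ob : Type;
  Hom : Ob -> Ob -> Type;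
  Cell : forall a b : Ob, Hom a b -> Hom a b -> Type;
  id1 : forall a, Hom a a;
  comp1 : forall a b c, Hom b c -> Hom a b -> Hom a c;
  id2 : forall a b (f : Hom a b), Cell _ _ f f;
  vcomp : forall a b (f g h : Hom a b), Cell _ _ g h -> Cell _ _ f g -> Cell _ _ f h;
  hcomp : forall a b c (g g' : Hom b c) (f f' : Hom a b),
      Cell _ _ g g' -> Cell _ _ f f' -> Cell _ _ (comp1 _ _ _ g f) (comp1 _ _ _ g' f');
  comp1_assoc : forall a b c d (h : Hom c d) (g : Hom b c) (f : Hom a b),
      comp1 _ _ _ h (comp1 _ _ _ g f) = comp1 _ _ _ (comp1 _ _ _ h g) f;
  comp1_idl : forall a b (f : Hom a b), comp1 _ _ _ (id1 b) f = f;
  comp1_idr : forall a b (f : Hom a b), comp1 _ _ _ f (id1 a) = f;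
  vcomp_assoc : forall a b (f g h i : Hom a b)
      (x : Cell _ _ h i) (y : Cell _ _ g h) (z : Cell _ _ f g),
      vcomp _ _ _ _ _ x (vcomp _ _ _ _ _ y z) = vcomp _ _ _ _ _ (vcomp _ _ _ _ _ x y) z;
  vcomp_idl : forall a b (f g : Hom a b) (x : Cell _ _ f g), vcomp _ _ _ _ _ (id2 _ _ g) x = x;
  vcomp_idr : forall a b (f g : Hom a b) (x : Cell _ _ f g), vcomp _ _ _ _ _ x (id2 _ _ f) = x;
  hcomp_id2 : forall a b c (g : Hom b c) (f : Hom a b),
      hcomp _ _ _ _ _ _ _ (id2 _ _ g) (id2 _ _ f) = id2 _ _ (comp1 _ _ _ g f);
  interchange : forall a b c (g g' g'' : Hom b c) (f f' f'' : Hom a b)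
      (x : Cell _ _ g g') (x' : Cell _ _ g' g'') (y : Cell _ _ f f') (y' : Cell _ _ f' f''),
      hcomp _ _ _ _ _ _ _ (vcomp _ _ _ _ _ x' x) (vcomp _ _ _ _ _ y' y)
      = vcomp _ _ _ _ _ (hcomp _ _ _ _ _ _ _ x' y') (hcomp _ _ _ _ _ _ _ x y);
  hcomp_assoc : forall a b c d (h h' : Hom c d) (g g' : Hom b c) (f f' : Hom a b)
      (x : Cell _ _ h h') (y : Cell _ _ g g') (z : Cell _ _ f f'),
      eq_rect _ (fun s => Cell _ _ s (comp1 _ _ _ (comp1 _ _ _ h' g') f'))
        (eq_rect _ (fun s => Cell _ _ (comp1 _ _ _ h (comp1 _ _ _ g f)) s)
           (hcomp _ _ _ _ _ _ _ x (hcomp _ _ _ _ _ _ _ y z)) _ (comp1_assoc _ _ _ _ h' g' f'))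
        _ (comp1_assoc _ _ _ _ h g f)
      = hcomp _ _ _ _ _ _ _ (hcomp _ _ _ _ _ _ _ x y) z;
  hcomp_idl : forall a b (f f' : Hom a b) (y : Cell _ _ f f'),
      eq_rect _ (fun s => Cell _ _ s f')
        (eq_rect _ (fun s => Cell _ _ (comp1 _ _ _ (id1 b) f) s)
           (hcomp _ _ _ _ _ _ _ (id2 _ _ (id1 b)) y) _ (comp1_idl _ _ f'))
        _ (comp1_idl _ _ f) = y;
  hcomp_idr : forall a b (f f' : Hom a b) (y : Cell _ _ f f'),
      eq_rect _ (fun s => Cell _ _ s f')
        (eq_rect _ (fun s => Cell _ _ (comp1 _ _ _ f (id1 a)) s)
           (hcomp _ _ _ _ _ _ _ y (id2 _ _ (id1 a))) _ (comp1_idr _ _ f'))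
        _ (comp1_idr _ _ f) = y
}.

Arguments Cell {t a b}.
Arguments id1 {t}.
Arguments comp1 {t a b c}.
Arguments id2 {t a b}.
Arguments vcomp {t a b f g h}.
Arguments hcomp {t a b c g g' f f'}.
Arguments comp1_assoc {t a b c d}.
Arguments comp1_idl {t a b}.
Arguments comp1_idr {t a b}.

Section TwoCatDefs.
Variable C : TwoCat.

Definition castS {a b} {f f' g : Hom C a b} (e : f = f') (x : Cell f g) : Cell f' g :=
  eq_rect f (fun s => Cell s g) x f' e.
Definition castT {a b} {f g g' : Hom C a b} (e : g = g') (x : Cell f g) : Cell f g' :=
  eq_rect g (fun s => Cell f s) x g' e.

(* whiskering: wl X x = "X x",  wr x X = "x X" *)
Definition wl {a b c} (X : Hom C b c) {f f' : Hom C a b} (x : Cell f f') :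
  Cell (comp1 X f) (comp1 X f') := hcomp (id2 X) x.
Definition wr {a b c} {g g' : Hom C b c} (x : Cell g g') (X : Hom C a b) :
  Cell (comp1 g X) (comp1 g' X) := hcomp x (id2 X).

Record Monad (k : Ob C) := {
  mt : Hom C k k;
  mmu : Cell (comp1 mt mt) mt;
  meta : Cell (id1 k) mt;
  mon_assoc : vcomp mmu (wr mmu mt) = castS (comp1_assoc mt mt mt) (vcomp mmu (wl mt mmu));
  mon_unitl : vcomp mmu (castS (comp1_idl mt) (wr meta mt)) = id2 mt;
  mon_unitr : vcomp mmu (castS (comp1_idr mt) (wl mt meta)) = id2 mt
}.

Arguments mt {k}.
Arguments mmu {k}.
Arguments meta {k}.

Section EM.
Variables (k : Ob C) (T : Monad k).

Definition is_alg {l} (A : Hom C l k) (alpha : Cell (comp1 (mt T) A) A) : Prop :=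
  vcomp alpha (wl (mt T) alpha)
    = vcomp alpha (castS (eq_sym (comp1_assoc (mt T) (mt T) A)) (wr (mmu T) A))
  /\ vcomp alpha (castS (comp1_idl A) (wr (meta T) A)) = id2 A.

Variables (J : Ob C) (f : Hom C k J) (v : Hom C J k) (eps : Cell (comp1 f v) (id1 J))
          (et : comp1 v f = mt T).

Lemma em_e1 : comp1 f (mt T) = comp1 (comp1 f v) f.
Proof. rewrite <- et. apply comp1_assoc. Qed.
Lemma em_e2 : comp1 v (comp1 f v) = comp1 (mt T) v.
Proof. rewrite <- et. apply comp1_assoc. Qed.
Lemma em_e3 : comp1 v (comp1 (id1 J) f) = mt T.
Proof. rewrite comp1_idl. exact et. Qed.
Lemma em_e4 : comp1 v (comp1 (comp1 f v) f) = comp1 (mt T) (mt T).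
Proof. rewrite <- et. rewrite <- (comp1_assoc f v f). apply comp1_assoc. Qed.

(* the action v e : t v => v of the universal algebra (v, v eps) *)
Definition em_act : Cell (comp1 (mt T) v) v :=
  castS em_e2 (castT (comp1_idr v) (wl v eps)).

Definition em_act_at {l} (h : Hom C l J) : Cell (comp1 (mt T) (comp1 v h)) (comp1 v h) :=
  castS (eq_sym (comp1_assoc (mt T) v h)) (wr em_act h).

(* (J, f, v, eps) is the Eilenberg–Moore object of T: f -| v is an adjunction
   with unit eta and counit eps, t = v f, mu = v eps f, and (v, v eps) is the
   universal t-algebra, i.e. K(l, J) -> Alg_t(l) is an isomorphism of categories
   for every l (bijective on 1-cells, bijective on 2-cells). *)
Definition is_EM_object : Prop :=
  vcomp (castT (comp1_idl f) (wr eps f))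
        (castT em_e1 (castS (comp1_idr f) (wl f (meta T)))) = id2 f
  /\ vcomp em_act (castS (comp1_idl v) (wr (meta T) v)) = id2 v
  /\ mmu T = castS em_e4 (castT em_e3 (wl v (wr eps f)))
  /\ (forall l (A : Hom C l k) (alpha : Cell (comp1 (mt T) A) A), @is_alg l A alpha ->
        exists h : Hom C l J,
          (exists e : comp1 v h = A,
              eq_rect _ (fun X => Cell (comp1 (mt T) X) X) (em_act_at h) A e = alpha)
          /\ forall h' : Hom C l J,
               (exists e : comp1 v h' = A,
                  eq_rect _ (fun X => Cell (comp1 (mt T) X) X) (em_act_at h') A e = alpha)
               -> h' = h)
  /\ (forall l (h h' : Hom C l J) (rho : Cell (comp1 v h) (comp1 v h')),
        vcomp (em_act_at h') (wl (mt T) rho) = vcomp rho (em_act_at h) ->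
        exists! sigma : Cell h h', wl v sigma = rho).

End EM.

Definition admits_EM : Prop :=
  forall k (T : Monad k), exists (J : Ob C) (f : Hom C k J) (v : Hom C J k)
    (eps : Cell (comp1 f v) (id1 J)) (et : comp1 v f = mt T),
    is_EM_object k T J f v eps et.

Definition idempotents_split : Prop :=
  forall a b (g : Hom C a b) (e : Cell g g), vcomp e e = e ->
    exists (h : Hom C a b) (p : Cell g h) (i : Cell h g),
      vcomp p i = id2 h /\ vcomp i p = e.

Section EMw.
Variables (k k' : Ob C) (T : Monad k) (T' : Monad k').

Definition EMw_1cell (X : Hom C k k') (chi : Cell (comp1 (mt T') X) (comp1 X (mt T))) : Prop :=
  castS (comp1_assoc (mt T') (mt T') X)
    (vcomp (castS (comp1_assoc X (mt T) (mt T)) (wl X (mmu T)))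
       (vcomp (castS (eq_sym (comp1_assoc (mt T') X (mt T))) (wr chi (mt T)))
          (wl (mt T') chi)))
  = vcomp chi (wr (mmu T') X).

Definition Xmu (X : Hom C k k') : Cell (comp1 (comp1 X (mt T)) (mt T)) (comp1 X (mt T)) :=
  castS (comp1_assoc X (mt T) (mt T)) (wl X (mmu T)).
Definition chit (X : Hom C k k') (chi : Cell (comp1 (mt T') X) (comp1 X (mt T))) :
  Cell (comp1 (mt T') (comp1 X (mt T))) (comp1 (comp1 X (mt T)) (mt T)) :=
  castS (eq_sym (comp1_assoc (mt T') X (mt T))) (wr chi (mt T)).

Definition EMw_2cell (V : Hom C k k') (psi : Cell (comp1 (mt T') V) (comp1 V (mt T)))
    (W : Hom C k k') (phi : Cell (comp1 (mt T') W) (comp1 W (mt T)))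
    (rho : Cell V (comp1 W (mt T))) : Prop :=
  vcomp (Xmu W) (vcomp (wr rho (mt T)) psi)
    = vcomp (Xmu W) (vcomp (chit W phi) (wl (mt T') rho))
  /\ rho = vcomp (Xmu W) (vcomp (chit W phi)
             (vcomp (castS (comp1_idl (comp1 W (mt T))) (wr (meta T') (comp1 W (mt T)))) rho)).

Variables (J : Ob C) (f : Hom C k J) (v : Hom C J k) (eps : Cell (comp1 f v) (id1 J))
          (et : comp1 v f = mt T).

Lemma eq_Xtv (X : Hom C k k') :
  comp1 (comp1 X (mt T)) v = comp1 (comp1 X v) (comp1 f v).
Proof.
  rewrite <- et. rewrite (comp1_assoc X v f). rewrite (comp1_assoc (comp1 X v) f v).
  reflexivity.
Qed.

Definition Xveps (X : Hom C k k') : Cell (comp1 (comp1 X (mt T)) v) (comp1 X v) :=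
  castS (eq_sym (eq_Xtv X)) (castT (comp1_idr (comp1 X v)) (wl (comp1 X v) eps)).

Definition chiv (X : Hom C k k') (chi : Cell (comp1 (mt T') X) (comp1 X (mt T))) :
  Cell (comp1 (mt T') (comp1 X v)) (comp1 (comp1 X (mt T)) v) :=
  castS (eq_sym (comp1_assoc (mt T') X v)) (wr chi v).

Definition EMidem (X : Hom C k k') (chi : Cell (comp1 (mt T') X) (comp1 X (mt T))) :
  Cell (comp1 X v) (comp1 X v) :=
  vcomp (Xveps X) (vcomp (chiv X chi)
    (castS (comp1_idl (comp1 X v)) (wr (meta T') (comp1 X v)))).

Definition tilde_chi (X : Hom C k k') (chi : Cell (comp1 (mt T') X) (comp1 X (mt T)))
    (Xt : Hom C J k') (p : Cell (comp1 X v) Xt) (i : Cell Xt (comp1 X v)) :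
  Cell (comp1 (mt T') Xt) Xt :=
  vcomp p (vcomp (Xveps X) (vcomp (chiv X chi) (wl (mt T') i))).

Definition tilde_rho (V W : Hom C k k') (rho : Cell V (comp1 W (mt T)))
    (Vt Wt : Hom C J k') (iV : Cell Vt (comp1 V v)) (pW : Cell (comp1 W v) Wt) :
  Cell Vt Wt :=
  vcomp pW (vcomp (Xveps W) (vcomp (wr rho v) iV)).

End EMw.

End TwoCatDefs.

Arguments castS {C a b f f' g}.
Arguments castT {C a b f g g'}.
Arguments wl {C a b c} X {f f'}.
Arguments wr {C a b c g g'}.
Arguments Monad {C}.
Arguments mt {C k}.
Arguments mmu {C k}.
Arguments meta {C k}.
Arguments mon_assoc {C k}.
Arguments mon_unitl {C k}.
Arguments mon_unitr {C k}.
Arguments is_alg {C k} T {l}.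
Arguments em_e1 {C k T J f v}.
Arguments em_e2 {C k T J f v}.
Arguments em_e3 {C k T J f v}.
Arguments em_e4 {C k T J f v}.
Arguments em_act {C k T J f v}.
Arguments em_act_at {C k T J f v} eps et {l}.
Arguments is_EM_object {C k T J f v}.
Arguments EMw_1cell {C k k'} T T'.
Arguments Xmu {C k k'} T.
Arguments chit {C k k'} T T' {X}.
Arguments EMw_2cell {C k k'} T T' {V}.
Arguments eq_Xtv {C k k' T J f v}.
Arguments Xveps {C k k' T J f v}.
Arguments chiv {C k k' T T' J v}.
Arguments EMidem {C k k' T} T' {J f v}.
Arguments tilde_chi {C k k' T} T' {J f v} eps et {X} chi {Xt}.
Arguments tilde_rho {C k k' T J f v} eps et {V W} rho {Vt Wt}.

From Stdlib Require Import Eqdep.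

(* Before splitting, [X v] carries the 2-cell [a_X := X v eps * chi v : t' X v => X v].
   Because [v eps] is an associative action (this is where [mu = v eps f] enters) and
   [chi] satisfies the EM^w 1-cell axiom, [a_X] is associative, and the idempotent
   [e_X = a_X * eta' X v] absorbs [a_X] on both sides: [e_X * a_X = a_X = a_X * t' e_X].
   The 2-cell axiom of [rho] makes [W v eps * rho v] intertwine [a_V] and [a_W].  The
   claimed equation then follows by inserting [iota pi = e] and absorbing it.

   Cells whose boundaries agree only up to propositional equalities of 1-cells are
   compared through [pack], which forgets the boundary. *)

Section TwoCellCalculus.
Context {C : TwoCat}.

Definition any_cell (a b : Ob C) := {f : Hom C a b & {g : Hom C a b & Cell f g}}.

Definition pack {a b} {f g : Hom C a b} (x : Cell f g) : any_cell a b :=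
  existT _ f (existT _ g x).

Lemma pack_inj {a b} {f g : Hom C a b} (x y : Cell f g) : pack x = pack y -> x = y.
Proof. intro H. apply inj_pair2, inj_pair2 in H. exact H. Qed.

Lemma pack_bounds {a b} {f g f' g' : Hom C a b} (x : Cell f g) (x' : Cell f' g') :
  pack x = pack x' -> f = f' /\ g = g'.
Proof.
  intro H. split.
  - exact (f_equal (@projT1 _ _) H).
  - exact (f_equal (fun p => projT1 (projT2 p)) H).
Qed.

Lemma pack_castS {a b} {f f' g : Hom C a b} (e : f = f') (x : Cell f g) :
  pack (castS e x) = pack x.
Proof. destruct e; reflexivity. Qed.

Lemma pack_castT {a b} {f g g' : Hom C a b} (e : g = g') (x : Cell f g) :
  pack (castT e x) = pack x.
Proof. destruct e; reflexivity. Qed.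

Lemma pack_id2 {a b} {f f' : Hom C a b} : f = f' -> pack (id2 f) = pack (id2 f').
Proof. intros ->; reflexivity. Qed.

Lemma pack_vcomp {a b} {f g h f' g' h' : Hom C a b}
  (x : Cell g h) (x' : Cell g' h') (y : Cell f g) (y' : Cell f' g') :
  pack x = pack x' -> pack y = pack y' -> pack (vcomp x y) = pack (vcomp x' y').
Proof.
  intros Hx Hy.
  destruct (pack_bounds x x' Hx) as [<- <-], (pack_bounds y y' Hy) as [<- _].
  rewrite (pack_inj _ _ Hx), (pack_inj _ _ Hy). reflexivity.
Qed.

Lemma pack_hcomp {a b c} {g g' g2 g2' : Hom C b c} {f f' f2 f2' : Hom C a b}
  (x : Cell g g') (x' : Cell g2 g2') (y : Cell f f') (y' : Cell f2 f2') :
  pack x = pack x' -> pack y = pack y' -> pack (hcomp x y) = pack (hcomp x' y').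
Proof.
  intros Hx Hy.
  destruct (pack_bounds x x' Hx) as [<- <-], (pack_bounds y y' Hy) as [<- <-].
  rewrite (pack_inj _ _ Hx), (pack_inj _ _ Hy). reflexivity.
Qed.

Lemma pack_hcomp_assoc {a b c d} {h h' : Hom C c d} {g g' : Hom C b c} {f f' : Hom C a b}
  (x : Cell h h') (y : Cell g g') (z : Cell f f') :
  pack (hcomp x (hcomp y z)) = pack (hcomp (hcomp x y) z).
Proof.
  rewrite <- (hcomp_assoc C).
  symmetry. exact (eq_trans (pack_castS _ _) (pack_castT _ _)).
Qed.

Lemma pack_hcomp_id1l {a b} {f f' : Hom C a b} (y : Cell f f') :
  pack (hcomp (id2 (id1 b)) y) = pack y.
Proof.
  etransitivity; [| exact (f_equal pack (hcomp_idl C _ _ _ _ y))].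
  symmetry. exact (eq_trans (pack_castS _ _) (pack_castT _ _)).
Qed.

Lemma pack_hcomp_id1r {a b} {f f' : Hom C a b} (y : Cell f f') :
  pack (hcomp y (id2 (id1 a))) = pack y.
Proof.
  etransitivity; [| exact (f_equal pack (hcomp_idr C _ _ _ _ y))].
  symmetry. exact (eq_trans (pack_castS _ _) (pack_castT _ _)).
Qed.

Lemma wl_vcomp {a b c} (X : Hom C b c) {f g h : Hom C a b} (x : Cell g h) (y : Cell f g) :
  wl X (vcomp x y) = vcomp (wl X x) (wl X y).
Proof. unfold wl. rewrite <- interchange, vcomp_idl. reflexivity. Qed.

Lemma wr_vcomp {a b c} {f g h : Hom C b c} (x : Cell g h) (y : Cell f g) (X : Hom C a b) :
  wr (vcomp x y) X = vcomp (wr x X) (wr y X).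
Proof. unfold wr. rewrite <- interchange, vcomp_idl. reflexivity. Qed.

Lemma hcomp_wr_wl {a b c} {g g' : Hom C b c} {f f' : Hom C a b}
  (x : Cell g g') (y : Cell f f') : hcomp x y = vcomp (wr x f') (wl g y).
Proof. unfold wl, wr. rewrite <- interchange, vcomp_idl, vcomp_idr. reflexivity. Qed.

Lemma hcomp_wl_wr {a b c} {g g' : Hom C b c} {f f' : Hom C a b}
  (x : Cell g g') (y : Cell f f') : hcomp x y = vcomp (wl g' y) (wr x f).
Proof. unfold wl, wr. rewrite <- interchange, vcomp_idl, vcomp_idr. reflexivity. Qed.

Lemma pack_wl_wl {a b c d} (X : Hom C c d) (Y : Hom C b c) {f f' : Hom C a b}
  (y : Cell f f') : pack (wl X (wl Y y)) = pack (wl (comp1 X Y) y).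
Proof. unfold wl. rewrite pack_hcomp_assoc, hcomp_id2. reflexivity. Qed.

Lemma pack_wr_wr {a b c d} {g g' : Hom C c d} (x : Cell g g') (Y : Hom C b c)
  (Z : Hom C a b) : pack (wr (wr x Y) Z) = pack (wr x (comp1 Y Z)).
Proof. unfold wr. rewrite <- pack_hcomp_assoc, hcomp_id2. reflexivity. Qed.

Lemma pack_wl_wr {a b c d} (X : Hom C c d) {g g' : Hom C b c} (y : Cell g g')
  (Z : Hom C a b) : pack (wl X (wr y Z)) = pack (wr (wl X y) Z).
Proof. apply pack_hcomp_assoc. Qed.

Lemma counit_exchange {a} {g : Hom C a a} (e : Cell g (id1 a)) :
  vcomp e (castT (comp1_idr g) (wl g e)) = vcomp e (castT (comp1_idl g) (wr e g)).
Proof.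
  apply pack_inj. transitivity (pack (hcomp e e)).
  - rewrite (hcomp_wr_wl e e). apply pack_vcomp.
    + symmetry. apply pack_hcomp_id1r.
    + apply pack_castT.
  - rewrite (hcomp_wl_wr e e). apply pack_vcomp.
    + apply pack_hcomp_id1l.
    + symmetry. apply pack_castT.
Qed.

Lemma meta_natural {a b} (M : Monad b) {g h : Hom C a b} (x : Cell g h) :
  vcomp (castS (comp1_idl h) (wr (meta M) h)) x
  = vcomp (wl (mt M) x) (castS (comp1_idl g) (wr (meta M) g)).
Proof.
  apply pack_inj. transitivity (pack (hcomp (meta M) x)).
  - rewrite (hcomp_wr_wl (meta M) x). apply pack_vcomp.
    + apply pack_castS.
    + symmetry. apply pack_hcomp_id1l.
  - rewrite (hcomp_wl_wr (meta M) x). apply pack_vcomp.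
    + reflexivity.
    + symmetry. apply pack_castS.
Qed.

Definition mmu_at {a b} (M : Monad b) (Y : Hom C a b) :
  Cell (comp1 (mt M) (comp1 (mt M) Y)) (comp1 (mt M) Y) :=
  castS (eq_sym (comp1_assoc (mt M) (mt M) Y)) (wr (mmu M) Y).

Lemma mmu_at_unitl {a b} (M : Monad b) (Y : Hom C a b) :
  vcomp (mmu_at M Y) (castS (comp1_idl _) (wr (meta M) (comp1 (mt M) Y))) = id2 _.
Proof.
  apply pack_inj.
  transitivity (pack (hcomp (vcomp (mmu M) (castS (comp1_idl (mt M)) (wr (meta M) (mt M))))
                            (vcomp (id2 Y) (id2 Y)))).
  - rewrite interchange. apply pack_vcomp.
    + apply pack_castS.
    + rewrite pack_castS, <- pack_wr_wr.
      apply pack_hcomp; [symmetry; apply pack_castS | reflexivity].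
  - rewrite (mon_unitl M), vcomp_idl, hcomp_id2. reflexivity.
Qed.

Lemma mmu_at_unitr {a b} (M : Monad b) (Y : Hom C a b) :
  vcomp (mmu_at M Y) (wl (mt M) (castS (comp1_idl Y) (wr (meta M) Y))) = id2 _.
Proof.
  apply pack_inj.
  transitivity (pack (hcomp (vcomp (mmu M) (castS (comp1_idr (mt M)) (wl (mt M) (meta M))))
                            (vcomp (id2 Y) (id2 Y)))).
  - rewrite interchange. apply pack_vcomp.
    + apply pack_castS.
    + transitivity (pack (wl (mt M) (wr (meta M) Y))).
      { apply pack_hcomp; [reflexivity | apply pack_castS]. }
      rewrite pack_wl_wr. apply pack_hcomp; [symmetry; apply pack_castS | reflexivity].
  - rewrite (mon_unitr M), vcomp_idl, hcomp_id2. reflexivity.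
Qed.

End TwoCellCalculus.

Section EMResolution.
Context {C : TwoCat} {k k' J : Ob C} {T : Monad k} {T' : Monad k'}
  {f : Hom C k J} {v : Hom C J k}.
Variables (eps : Cell (comp1 f v) (id1 J)) (et : comp1 v f = mt T).
Hypothesis HJ : is_EM_object eps et.

Definition v_eps : Cell (comp1 v (comp1 f v)) v := castT (comp1_idr v) (wl v eps).

Lemma tv_vfv : comp1 (mt T) v = comp1 v (comp1 f v).
Proof. rewrite <- et. symmetry. apply comp1_assoc. Qed.

Lemma pack_wl_mt {a} {g g' : Hom C a J} (y : Cell g g') :
  pack (wl (mt T) (wl v y)) = pack (wl v (wl (comp1 f v) y)).
Proof.
  rewrite pack_wl_wl, pack_wl_wl, comp1_assoc.
  apply pack_hcomp; [apply pack_id2; rewrite et; reflexivity | reflexivity].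
Qed.

Lemma pack_wr_mt {a} {g g' : Hom C k a} (x : Cell g g') :
  pack (wr (wr x (mt T)) v) = pack (wr x (comp1 v (comp1 f v))).
Proof.
  rewrite pack_wr_wr. apply pack_hcomp; [reflexivity | apply pack_id2, tv_vfv].
Qed.

Lemma v_eps_assoc :
  pack (vcomp v_eps (castT tv_vfv (wl (mt T) v_eps)))
  = pack (vcomp v_eps (castT tv_vfv (wr (mmu T) v))).
Proof.
  destruct HJ as (_ & _ & Hmu & _).
  transitivity (pack (wl v (vcomp eps (castT (comp1_idr _) (wl (comp1 f v) eps))))).
  { rewrite wl_vcomp. apply pack_vcomp; [apply pack_castT |].
    rewrite pack_castT.
    transitivity (pack (wl (mt T) (wl v eps))).
    { apply pack_hcomp; [reflexivity | apply pack_castT]. }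
    rewrite pack_wl_mt. apply pack_hcomp; [reflexivity | symmetry; apply pack_castT]. }
  rewrite counit_exchange, wl_vcomp. apply pack_vcomp; [symmetry; apply pack_castT |].
  rewrite pack_castT.
  transitivity (pack (wl v (wr (wr eps f) v))).
  { apply pack_hcomp; [reflexivity |]. rewrite pack_castT, pack_wr_wr. reflexivity. }
  rewrite pack_wl_wr. apply pack_hcomp; [| reflexivity].
  rewrite Hmu, pack_castS, pack_castT. reflexivity.
Qed.

Lemma pack_Xveps (X : Hom C k k') : pack (Xveps eps et X) = pack (wl X v_eps).
Proof.
  unfold Xveps. rewrite pack_castS, pack_castT, <- pack_wl_wl.
  apply pack_hcomp; [reflexivity | symmetry; apply pack_castT].
Qed.

Lemma Xveps_assoc (X : Hom C k k') :
  vcomp (Xveps eps et X) (Xveps eps et (comp1 X (mt T)))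
  = vcomp (Xveps eps et X) (wr (Xmu T X) v).
Proof.
  apply pack_inj.
  transitivity (pack (wl X (vcomp v_eps (castT tv_vfv (wl (mt T) v_eps))))).
  { rewrite wl_vcomp. apply pack_vcomp; [apply pack_Xveps |].
    rewrite pack_Xveps, <- pack_wl_wl.
    apply pack_hcomp; [reflexivity | symmetry; apply pack_castT]. }
  transitivity (pack (wl X (vcomp v_eps (castT tv_vfv (wr (mmu T) v))))).
  { apply pack_hcomp; [reflexivity | exact v_eps_assoc]. }
  rewrite wl_vcomp. apply pack_vcomp; [symmetry; apply pack_Xveps |].
  transitivity (pack (wl X (wr (mmu T) v))).
  { apply pack_hcomp; [reflexivity | apply pack_castT]. }
  rewrite pack_wl_wr. apply pack_hcomp; [symmetry; apply pack_castS | reflexivity].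
Qed.

Lemma Xveps_natural (X Y : Hom C k k') (x : Cell X Y) :
  vcomp (wr x v) (Xveps eps et X) = vcomp (Xveps eps et Y) (wr (wr x (mt T)) v).
Proof.
  apply pack_inj. transitivity (pack (hcomp x v_eps)).
  - rewrite (hcomp_wr_wl x v_eps). apply pack_vcomp; [reflexivity | apply pack_Xveps].
  - rewrite (hcomp_wl_wr x v_eps).
    apply pack_vcomp; symmetry; [apply pack_Xveps | apply pack_wr_mt].
Qed.

Lemma chiv_Xveps (X : Hom C k k') (chi : Cell (comp1 (mt T') X) (comp1 X (mt T))) :
  vcomp (chiv X chi) (wl (mt T') (Xveps eps et X))
  = vcomp (Xveps eps et (comp1 X (mt T))) (chiv (comp1 X (mt T)) (chit T T' chi)).
Proof.
  apply pack_inj. transitivity (pack (hcomp chi v_eps)).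
  - rewrite (hcomp_wr_wl chi v_eps). apply pack_vcomp; [apply pack_castS |].
    rewrite <- pack_wl_wl. apply pack_hcomp; [reflexivity | apply pack_Xveps].
  - rewrite (hcomp_wl_wr chi v_eps). apply pack_vcomp; [symmetry; apply pack_Xveps |].
    unfold chiv, chit. rewrite pack_castS, <- pack_wr_mt.
    apply pack_hcomp; [symmetry; apply pack_castS | reflexivity].
Qed.

Lemma chiv_chit (X : Hom C k k') (chi : Cell (comp1 (mt T') X) (comp1 X (mt T))) :
  pack (vcomp (chiv (v := v) (comp1 X (mt T)) (chit T T' chi)) (wl (mt T') (chiv X chi)))
  = pack (wr (vcomp (chit T T' chi) (wl (mt T') chi)) v).
Proof.
  rewrite wr_vcomp. apply pack_vcomp; [apply pack_castS |].
  rewrite <- pack_wl_wr. apply pack_hcomp; [reflexivity | apply pack_castS].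
Qed.

Definition Xv_action (X : Hom C k k') (chi : Cell (comp1 (mt T') X) (comp1 X (mt T))) :
  Cell (comp1 (mt T') (comp1 X v)) (comp1 X v) :=
  vcomp (Xveps eps et X) (chiv X chi).

Lemma Xv_action_assoc (X : Hom C k k') (chi : Cell (comp1 (mt T') X) (comp1 X (mt T))) :
  EMw_1cell T T' X chi ->
  vcomp (Xv_action X chi) (wl (mt T') (Xv_action X chi))
  = vcomp (Xv_action X chi) (mmu_at T' (comp1 X v)).
Proof.
  intro Hchi. unfold Xv_action. rewrite wl_vcomp.
  transitivity (vcomp (Xveps eps et X) (vcomp (vcomp (chiv X chi) (wl (mt T') (Xveps eps et X)))
                                              (wl (mt T') (chiv X chi)))).
  { rewrite !vcomp_assoc. reflexivity. }
  rewrite chiv_Xveps.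
  transitivity (vcomp (vcomp (Xveps eps et X) (Xveps eps et (comp1 X (mt T))))
                  (vcomp (chiv (comp1 X (mt T)) (chit T T' chi)) (wl (mt T') (chiv X chi)))).
  { rewrite !vcomp_assoc. reflexivity. }
  rewrite Xveps_assoc, <- !vcomp_assoc. apply pack_inj, pack_vcomp; [reflexivity |].
  transitivity (pack (vcomp (wr (Xmu T X) v) (wr (vcomp (chit T T' chi) (wl (mt T') chi)) v))).
  { apply pack_vcomp; [reflexivity | apply chiv_chit]. }
  rewrite <- wr_vcomp.
  transitivity (pack (wr (vcomp chi (wr (mmu T') X)) v)).
  { apply pack_hcomp; [| reflexivity]. rewrite <- Hchi, pack_castS. reflexivity. }
  rewrite wr_vcomp. apply pack_vcomp; [symmetry; apply pack_castS |].
  unfold mmu_at. rewrite pack_castS. apply pack_wr_wr.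
Qed.

Lemma EMidem_Xv_action (X : Hom C k k') (chi : Cell (comp1 (mt T') X) (comp1 X (mt T))) :
  EMidem T' eps et X chi
  = vcomp (Xv_action X chi) (castS (comp1_idl _) (wr (meta T') (comp1 X v))).
Proof. unfold EMidem, Xv_action. rewrite vcomp_assoc. reflexivity. Qed.

Lemma EMidem_absorbl (X : Hom C k k') (chi : Cell (comp1 (mt T') X) (comp1 X (mt T))) :
  EMw_1cell T T' X chi ->
  vcomp (EMidem T' eps et X chi) (Xv_action X chi) = Xv_action X chi.
Proof.
  intro Hchi.
  rewrite EMidem_Xv_action, <- vcomp_assoc, meta_natural, vcomp_assoc,
    (Xv_action_assoc X chi Hchi), <- vcomp_assoc, mmu_at_unitl, vcomp_idr.
  reflexivity.
Qed.

Lemma EMidem_absorbr (X : Hom C k k') (chi : Cell (comp1 (mt T') X) (comp1 X (mt T))) :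
  EMw_1cell T T' X chi ->
  vcomp (Xv_action X chi) (wl (mt T') (EMidem T' eps et X chi)) = Xv_action X chi.
Proof.
  intro Hchi.
  rewrite EMidem_Xv_action, wl_vcomp, vcomp_assoc, (Xv_action_assoc X chi Hchi),
    <- vcomp_assoc, mmu_at_unitr, vcomp_idr.
  reflexivity.
Qed.

Lemma Xveps_rho_intertwines (V W : Hom C k k')
  (psi : Cell (comp1 (mt T') V) (comp1 V (mt T)))
  (phi : Cell (comp1 (mt T') W) (comp1 W (mt T))) (rho : Cell V (comp1 W (mt T))) :
  vcomp (Xmu T W) (vcomp (wr rho (mt T)) psi)
    = vcomp (Xmu T W) (vcomp (chit T T' phi) (wl (mt T') rho)) ->
  vcomp (vcomp (Xveps eps et W) (wr rho v)) (Xv_action V psi)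
  = vcomp (Xv_action W phi) (wl (mt T') (vcomp (Xveps eps et W) (wr rho v))).
Proof.
  intro Hrho. unfold Xv_action. rewrite wl_vcomp.
  transitivity (vcomp (Xveps eps et W)
                  (vcomp (vcomp (wr rho v) (Xveps eps et V)) (chiv V psi))).
  { rewrite !vcomp_assoc. reflexivity. }
  rewrite Xveps_natural.
  transitivity (vcomp (vcomp (Xveps eps et W) (Xveps eps et (comp1 W (mt T))))
                  (vcomp (wr (wr rho (mt T)) v) (chiv V psi))).
  { rewrite !vcomp_assoc. reflexivity. }
  rewrite Xveps_assoc. symmetry.
  transitivity (vcomp (Xveps eps et W)
                  (vcomp (vcomp (chiv W phi) (wl (mt T') (Xveps eps et W)))
                         (wl (mt T') (wr rho v)))).
  { rewrite !vcomp_assoc. reflexivity. }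
  rewrite chiv_Xveps.
  transitivity (vcomp (vcomp (Xveps eps et W) (Xveps eps et (comp1 W (mt T))))
                  (vcomp (chiv (comp1 W (mt T)) (chit T T' phi)) (wl (mt T') (wr rho v)))).
  { rewrite !vcomp_assoc. reflexivity. }
  rewrite Xveps_assoc, <- !vcomp_assoc. apply pack_inj, pack_vcomp; [reflexivity |].
  symmetry.
  transitivity (pack (wr (vcomp (Xmu T W) (vcomp (wr rho (mt T)) psi)) v)).
  { rewrite !wr_vcomp. do 2 (apply pack_vcomp; [reflexivity |]). apply pack_castS. }
  rewrite Hrho, !wr_vcomp. apply pack_vcomp; [reflexivity |].
  apply pack_vcomp; [symmetry; apply pack_castS | symmetry; apply pack_wl_wr].
Qed.

End EMResolution.

Theorem lemma3p4 (C : TwoCat) (HEM : admits_EM C) (Hsplit : idempotents_split C)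
  (k k' : Ob C) (T : Monad k) (T' : Monad k')
  (J : Ob C) (f : Hom C k J) (v : Hom C J k) (eps : Cell (comp1 f v) (id1 J))
  (et : comp1 v f = mt T) (HJ : is_EM_object eps et)
  (V W : Hom C k k')
  (psi : Cell (comp1 (mt T') V) (comp1 V (mt T)))
  (phi : Cell (comp1 (mt T') W) (comp1 W (mt T)))
  (Hpsi : EMw_1cell T T' V psi) (Hphi : EMw_1cell T T' W phi)
  (rho : Cell V (comp1 W (mt T))) (Hrho : EMw_2cell T T' psi W phi rho)
  (Vt : Hom C J k') (pV : Cell (comp1 V v) Vt) (iV : Cell Vt (comp1 V v))
  (HpiV : vcomp pV iV = id2 Vt) (HipV : vcomp iV pV = EMidem T' eps et V psi)
  (Wt : Hom C J k') (pW : Cell (comp1 W v) Wt) (iW : Cell Wt (comp1 W v))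
  (HpiW : vcomp pW iW = id2 Wt) (HipW : vcomp iW pW = EMidem T' eps et W phi) :
  vcomp (tilde_rho eps et rho iV pW) (tilde_chi T' eps et psi pV iV)
  = vcomp (tilde_chi T' eps et phi pW iW) (wl (mt T') (tilde_rho eps et rho iV pW)).
Proof.
  unfold tilde_rho, tilde_chi.
  transitivity (vcomp pW (vcomp (vcomp (vcomp (Xveps eps et W) (wr rho v))
                                        (vcomp (vcomp iV pV) (Xv_action eps et V psi)))
                                 (wl (mt T') iV))).
  { unfold Xv_action. rewrite !vcomp_assoc. reflexivity. }
  rewrite HipV, (EMidem_absorbl eps et HJ V psi Hpsi),
    (Xveps_rho_intertwines eps et HJ V W psi phi rho (proj1 Hrho)).
  symmetry.
  transitivity (vcomp pW (vcomp (vcomp (vcomp (Xv_action eps et W phi)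
                                               (wl (mt T') (vcomp iW pW)))
                                        (wl (mt T') (vcomp (Xveps eps et W) (wr rho v))))
                                 (wl (mt T') iV))).
  { rewrite !wl_vcomp. unfold Xv_action. rewrite !vcomp_assoc. reflexivity. }
  rewrite HipW, (EMidem_absorbr eps et HJ W phi Hphi), !vcomp_assoc. reflexivity.
Qed.
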